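(* Let $(X,d)$ be a complete metric space with $|X|\geqslant 3$ and let $T\colon X\to X$ be asymptotically regular and satisfy, for some $\alpha\in[0,\frac12)$ and $\lambda\in[0,1)$, $$d(Tx,Ty)+d(Ty,Tz)+d(Tx,Tz)\leqslant \alpha\big(d(x,y)+d(y,z)+d(z,x)\big)+\lambda\big(d(x,Tx)+d(y,Ty)+d(z,Tz)\big)$$ for all pairwise distinct $x,y,z\in X$. Then $T$ has a fixed point, and $T$ has at most two fixed points.
   Context: A mapping $T\colon X\to X$ on a metric space is asymptotically regular if $\lim_{n\to\infty}d(T^{n+1}x,T^nx)=0$ for every $x\in X$. *)

From Stdlib Require Export Reals.
Open Scope R_scope.

Definition is_metric {X : Type} (d : X -> X -> R) : Prop :=
  (forall x y, 0 <= d x y) /\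
  (forall x y, d x y = 0 <-> x = y) /\
  (forall x y, d x y = d y x) /\
  (forall x y z, d x z <= d x y + d y z).

Definition cauchy_seq {X : Type} (d : X -> X -> R) (u : nat -> X) : Prop :=
  forall eps, 0 < eps -> exists N, forall m n, (N <= m)%nat -> (N <= n)%nat ->
    d (u m) (u n) < eps.

Definition converges_to {X : Type} (d : X -> X -> R) (u : nat -> X) (l : X) : Prop :=
  forall eps, 0 < eps -> exists N, forall n, (N <= n)%nat -> d (u n) l < eps.

Definition complete_metric {X : Type} (d : X -> X -> R) : Prop :=
  forall u, cauchy_seq d u -> exists l, converges_to d u l.

Definition iter {X : Type} (n : nat) (T : X -> X) (x : X) : X := Nat.iter n T x.

Definition asymptotically_regular {X : Type} (d : X -> X -> R) (T : X -> X) : Prop :=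
  forall x, Un_cv (fun n => d (iter (S n) T x) (iter n T x)) 0.

(* Along an orbit without fixed points, the triangle condition applied to the triples
   (T^n x, T^m x, T^(n+1) x) bounds d(T^n x, T^m x) by the displacements at n, m and n+1,
   which tend to 0 by asymptotic regularity; so the orbit is Cauchy.  Applied to
   (T^n x, l, T^(n+1) x) for the limit l it bounds (1 - lambda) d(l, T l) by quantities
   tending to 0, so l is fixed.  Three distinct fixed points would give
   (1 - alpha) (d(x,y) + d(y,z) + d(z,x)) <= 0. *)

From Stdlib Require Import Reals Lra Psatz Classical.
Open Scope R_scope.

Lemma Un_cv_const (c : R) : Un_cv (fun _ => c) c.
Proof.
  intros eps Heps. exists 0%nat. intros n _.
  unfold Rdist. rewrite Rminus_diag, Rabs_R0. exact Heps.
Qed.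

Lemma Un_cv_null_plus (a b : nat -> R) :
  Un_cv a 0 -> Un_cv b 0 -> Un_cv (fun n => a n + b n) 0.
Proof.
  intros Ha Hb. pose proof (CV_plus _ _ _ _ Ha Hb) as H.
  rewrite Rplus_0_r in H. exact H.
Qed.

Lemma Un_cv_null_scal (k : R) (a : nat -> R) :
  Un_cv a 0 -> Un_cv (fun n => k * a n) 0.
Proof.
  intros Ha. pose proof (CV_mult _ _ _ _ (Un_cv_const k) Ha) as H.
  rewrite Rmult_0_r in H. exact H.
Qed.

Lemma Un_cv_succ (a : nat -> R) (l : R) : Un_cv a l -> Un_cv (fun n => a (S n)) l.
Proof.
  intros Ha eps Heps. destruct (Ha eps Heps) as [N HN].
  exists N. intros n Hn. apply HN. lia.
Qed.

Lemma Rle_0_of_le_null_seq (r : R) (c : nat -> R) :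
  Un_cv c 0 -> (forall n, r <= c n) -> r <= 0.
Proof.
  intros Hc Hr. exact (Rle_cv_lim Hr (Un_cv_const r) Hc).
Qed.

Section MetricSpace.

Variables (X : Type) (d : X -> X -> R).
Hypothesis Hd : is_metric d.

Lemma dist_nonneg (x y : X) : 0 <= d x y.
Proof. apply Hd. Qed.

Lemma dist_refl (x : X) : d x x = 0.
Proof. apply Hd. reflexivity. Qed.

Lemma dist_eq_0 (x y : X) : d x y = 0 -> x = y.
Proof. apply Hd. Qed.

Lemma dist_comm (x y : X) : d x y = d y x.
Proof. apply Hd. Qed.

Lemma dist_triangle (x y z : X) : d x z <= d x y + d y z.
Proof. apply Hd. Qed.

Lemma converges_to_dist_null (u : nat -> X) (l : X) :
  converges_to d u l -> Un_cv (fun n => d (u n) l) 0.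
Proof.
  intros Hu eps Heps. destruct (Hu eps Heps) as [N HN].
  exists N. intros n Hn. unfold Rdist.
  rewrite Rminus_0_r, Rabs_pos_eq by apply dist_nonneg. exact (HN n Hn).
Qed.

Lemma cauchy_seq_of_dist_le (u : nat -> X) (b : nat -> R) :
  Un_cv b 0 -> (forall n m, d (u n) (u m) <= b n + b m) -> cauchy_seq d u.
Proof.
  intros Hb Hub eps Heps.
  destruct (Hb (eps / 2)) as [N HN]; [lra|].
  exists N. intros n m Hn Hm.
  specialize (HN n Hn) as Hbn. specialize (HN m Hm) as Hbm.
  unfold Rdist in Hbn, Hbm. rewrite Rminus_0_r in Hbn, Hbm.
  apply Rabs_def2 in Hbn, Hbm.
  specialize (Hub n m). lra.
Qed.

End MetricSpace.

Section TriangleContraction.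

Variables (X : Type) (d : X -> X -> R) (T : X -> X) (alpha lambda : R).
Hypothesis Hd : is_metric d.
Hypothesis HT : forall x y z : X, x <> y -> y <> z -> x <> z ->
  d (T x) (T y) + d (T y) (T z) + d (T x) (T z)
  <= alpha * (d x y + d y z + d z x)
     + lambda * (d x (T x) + d y (T y) + d z (T z)).

Lemma at_most_two_fixed_points (x y z : X) : alpha < 1 ->
  T x = x -> T y = y -> T z = z -> x = y \/ y = z \/ x = z.
Proof.
  intros Halpha Hx Hy Hz.
  destruct (classic (x = y)) as [|Hxy]; [now left|].
  destruct (classic (y = z)) as [|Hyz]; [now right; left|].
  destruct (classic (x = z)) as [|Hxz]; [now right; right|].
  exfalso. apply Hxy, (dist_eq_0 _ _ Hd).
  pose proof (HT x y z Hxy Hyz Hxz) as Hcontr.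
  rewrite Hx, Hy, Hz, !(dist_refl _ _ Hd), (dist_comm _ _ Hd z x) in Hcontr.
  pose proof (dist_nonneg _ _ Hd x y). pose proof (dist_nonneg _ _ Hd y z).
  pose proof (dist_nonneg _ _ Hd x z).
  nra.
Qed.

Hypothesis Halpha0 : 0 <= alpha.
Hypothesis Halpha1 : alpha < 1/2.
Hypothesis Hlambda0 : 0 <= lambda.
Hypothesis Hlambda1 : lambda < 1.

Lemma dist_le_displacements (p q : X) : T p <> p ->
  (1 - 2 * alpha) * d p q <= 3 * (d (T p) p + d (T q) q + d (T (T p)) (T p)).
Proof.
  intros Hp.
  pose proof (dist_nonneg _ _ Hd (T p) p). pose proof (dist_nonneg _ _ Hd (T q) q).
  pose proof (dist_nonneg _ _ Hd (T (T p)) (T p)).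
  destruct (classic (p = q)) as [<-|Hpq].
  { rewrite (dist_refl _ _ Hd). lra. }
  destruct (classic (q = T p)) as [->|HqTp].
  { rewrite (dist_comm _ _ Hd). nra. }
  pose proof (HT p q (T p) Hpq HqTp (not_eq_sym Hp)) as Hcontr.
  pose proof (dist_triangle _ _ Hd p (T p) q).
  pose proof (dist_triangle _ _ Hd (T p) (T q) q).
  pose proof (dist_triangle _ _ Hd q p (T p)).
  pose proof (dist_nonneg _ _ Hd (T q) (T (T p))).
  pose proof (dist_nonneg _ _ Hd p q). pose proof (dist_nonneg _ _ Hd q (T p)).
  rewrite (dist_comm _ _ Hd p (T p)), (dist_comm _ _ Hd q (T q)),
    (dist_comm _ _ Hd (T p) (T (T p))), (dist_comm _ _ Hd q p),
    (dist_comm _ _ Hd (T q) q), (dist_comm _ _ Hd (T p) q) in *.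
  nra.
Qed.

Lemma displacement_le_dist_displacements (p l : X) : T p <> p ->
  (1 - lambda) * d l (T l)
  <= 2 * (d p l + d (T p) l) + 3 * (d (T p) p + d (T (T p)) (T p)).
Proof.
  intros Hp.
  pose proof (dist_nonneg _ _ Hd (T p) p).
  pose proof (dist_nonneg _ _ Hd (T (T p)) (T p)).
  pose proof (dist_nonneg _ _ Hd p l). pose proof (dist_nonneg _ _ Hd (T p) l).
  destruct (classic (p = l)) as [<-|Hpl].
  { rewrite (dist_comm _ _ Hd p (T p)). nra. }
  destruct (classic (l = T p)) as [->|HlTp].
  { rewrite (dist_comm _ _ Hd (T p) (T (T p))). nra. }
  pose proof (HT p l (T p) Hpl HlTp (not_eq_sym Hp)) as Hcontr.
  pose proof (dist_triangle _ _ Hd l (T p) (T l)).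
  pose proof (dist_nonneg _ _ Hd (T l) (T (T p))).
  pose proof (dist_nonneg _ _ Hd l (T l)).
  rewrite (dist_comm _ _ Hd p (T p)), (dist_comm _ _ Hd (T p) (T (T p))),
    (dist_comm _ _ Hd l (T p)), (dist_comm _ _ Hd (T p) (T l)) in *.
  nra.
Qed.

Section Orbit.

Variable x : X.
Hypothesis Hreg : asymptotically_regular d T.
Hypothesis Hnofix : forall n, T (iter n T x) <> iter n T x.

Let u (n : nat) : X := iter n T x.
Let a (n : nat) : R := d (u (S n)) (u n).

Lemma orbit_cauchy : cauchy_seq d u.
Proof.
  apply (cauchy_seq_of_dist_le _ _ u
    (fun n => 3 / (1 - 2 * alpha) * (a n + a (S n)))).
  - apply Un_cv_null_scal, Un_cv_null_plus.
    + apply Hreg.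
    + exact (Un_cv_succ _ _ (Hreg x)).
  - intros n m.
    pose proof (dist_le_displacements (u n) (u m) (Hnofix n)) as Hnm.
    apply (Rmult_le_reg_l (1 - 2 * alpha)); [lra|].
    replace ((1 - 2 * alpha) * (3 / (1 - 2 * alpha) * (a n + a (S n))
             + 3 / (1 - 2 * alpha) * (a m + a (S m))))
      with (3 * (a n + a m + a (S n)) + 3 * a (S m)) by (field; lra).
    unfold a; simpl.
    pose proof (dist_nonneg _ _ Hd (T (T (u m))) (T (u m))).
    lra.
Qed.

Lemma orbit_limit_fixed (l : X) : converges_to d u l -> T l = l.
Proof.
  intros Hl. symmetry. apply (dist_eq_0 _ _ Hd).
  set (e n := d (u n) l).
  assert (He : Un_cv e 0) by exact (converges_to_dist_null _ _ Hd u l Hl).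
  assert (Hbound : (1 - lambda) * d l (T l) <= 0).
  { apply (Rle_0_of_le_null_seq _ (fun n => 2 * (e n + e (S n)) + 3 * (a n + a (S n)))).
    - apply Un_cv_null_plus; apply Un_cv_null_scal, Un_cv_null_plus.
      + exact He.
      + exact (Un_cv_succ _ _ He).
      + apply Hreg.
      + exact (Un_cv_succ _ _ (Hreg x)).
    - intros n. exact (displacement_le_dist_displacements (u n) l (Hnofix n)). }
  pose proof (dist_nonneg _ _ Hd l (T l)). nra.
Qed.

End Orbit.

End TriangleContraction.

Theorem theorem4p3 (X : Type) (d : X -> X -> R) (T : X -> X) (alpha lambda : R) :
  is_metric d ->
  complete_metric d ->
  (exists a b c : X, a <> b /\ b <> c /\ a <> c) ->
  asymptotically_regular d T ->
  0 <= alpha -> alpha < 1/2 ->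
  0 <= lambda -> lambda < 1 ->
  (forall x y z : X, x <> y -> y <> z -> x <> z ->
     d (T x) (T y) + d (T y) (T z) + d (T x) (T z)
     <= alpha * (d x y + d y z + d z x)
        + lambda * (d x (T x) + d y (T y) + d z (T z))) ->
  (exists x, T x = x) /\
  (forall x y z : X, T x = x -> T y = y -> T z = z -> x = y \/ y = z \/ x = z).
Proof.
  intros Hd Hcomplete [x0 _] Hreg Halpha0 Halpha1 Hlambda0 Hlambda1 HT.
  split; [|intros x y z; apply (at_most_two_fixed_points _ _ _ alpha lambda Hd HT); lra].
  destruct (classic (exists n, T (iter n T x0) = iter n T x0)) as [[n Hn]|Hfix].
  { now exists (iter n T x0). }
  assert (Hnofix : forall n, T (iter n T x0) <> iter n T x0)
    by (intros n Hn; apply Hfix; now exists n).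
  destruct (Hcomplete (fun n => iter n T x0)) as [l Hl].
  { eapply orbit_cauchy; eassumption. }
  exists l. eapply orbit_limit_fixed; eassumption.
Qed.
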